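(* Let $X$ be a Hausdorff space all of whose finite powers are Lindel\''of. If for every positive integer $k$ the polarized partition relation $\left(\begin{array}{c}\Omega\\ \Omega\end{array}\right)\longrightarrow\left[\begin{array}{c}\Omega\\ \Omega\end{array}\right]^{1,1}_{k/<3}$ holds for $X$, then $X$ has the property $\textsf{Split}(\Omega,\Omega)$.
   Context: $\Omega$: the $\omega$-covers of $X$ (open covers $\mathcal{U}$ with $X\notin\mathcal{U}$ such that each finite subset of $X$ lies in some member). The relation $\left(\begin{array}{c}\Omega\\ \Omega\end{array}\right)\longrightarrow\left[\begin{array}{c}\Omega\\ \Omega\end{array}\right]^{1,1}_{k/<3}$ means: for all $\mathcal{U}_1,\mathcal{U}_2\in\Omega$ and every $f:\mathcal{U}_1\times\mathcal{U}_2\to\{1,\dots,k\}$ there are $\mathcal{B}_1\subseteq\mathcal{U}_1$ and $\mathcal{B}_2\subseteq\mathcal{U}_2$ with $\mathcal{B}_1,\mathcal{B}_2\in\Omega$ such that $f$ takes fewer than $3$ distinct values on $\mathcal{B}_1\times\mathcal{B}_2$. $\textsf{Split}(\Omega,\Omega)$: for every $\omega$-cover $\mathcal{U}$ there are $\omega$-covers $\mathcal{B}_1,\mathcal{B}_2$ with $\mathcal{B}_1\cap\mathcal{B}_2=\emptyset$ and $\mathcal{B}_1\cup\mathcal{B}_2=\mathcal{U}$. *)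

From HB Require Import structures.
From mathcomp Require Import all_boot all_order all_algebra.
From mathcomp Require Import all_classical all_reals all_analysis.
Set Implicit Arguments. Unset Strict Implicit. Unset Printing Implicit Defensive.
Local Open Scope classical_set_scope.

Definition lindelof (T : topologicalType) : Prop :=
  forall C : set (set T), (forall A, C A -> open A) ->
    setT `<=` \bigcup_(A in C) A ->
    exists D : set (set T), [/\ D `<=` C, countable D &
                               setT `<=` \bigcup_(A in D) A].

Definition power (X : topologicalType) (n : nat) : topologicalType :=
  {ptws 'I_n -> X}.

Definition omega_cover (X : topologicalType) (U : set (set X)) : Prop :=
  [/\ forall A, U A -> open A,
      ~ U setT &
      forall F : set X, finite_set F -> exists2 A, U A & F `<=` A].

Definition polarized_omega (X : topologicalType) (k : nat) : Prop :=
  forall (U1 U2 : set (set X)), omega_cover U1 -> omega_cover U2 ->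
  forall f : set X -> set X -> 'I_k,
  exists B1 B2 : set (set X),
    [/\ B1 `<=` U1, B2 `<=` U2, omega_cover B1, omega_cover B2 &
        exists S : {set 'I_k}, (#|S| < 3)%N /\
          (forall a b, B1 a -> B2 b -> f a b \in S)].

Definition split_omega (X : topologicalType) : Prop :=
  forall U : set (set X), omega_cover U ->
  exists B1 B2 : set (set X),
    [/\ omega_cover B1, omega_cover B2, B1 `&` B2 = set0 & B1 `|` B2 = U].

From mathcomp Require Import all_boot all_order all_algebra.
From mathcomp Require Import all_classical all_reals all_analysis.

(* If an
   omega-cover U does not split, every omega-cover B contained in U contains
   all members of U above some finite set F, since otherwise B and U \ B
   split U.  Colour a pair (a, b) by 0 if a = b and otherwise by 1 or 2
   according to which of a, b a fixed choice function picks from {a, b}.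
   For B1, B2 given by the partition relation, two distinct members c, d of
   U above F1 u F2 lie in both B1 and B2, and (c, c), (c, d), (d, c) receive
   three different colours. *)

Set Implicit Arguments. Unset Strict Implicit. Unset Printing Implicit Defensive.
Local Open Scope classical_set_scope.

Section PairColouring.
Variable T : choiceType.

Definition pair_pick (a b : T) : T := xget a [set a; b].

Lemma pair_pickC a b : pair_pick a b = pair_pick b a.
Proof.
(* [xget] uses its default only on an empty set. *)
rewrite /pair_pick setUC /xget; case: pselect => // -[].
by exists a; apply/asboolP; right.
Qed.

Lemma pair_pickP a b : pair_pick a b = a \/ pair_pick a b = b.
Proof. by have [] := @xgetI _ a [set a; b] a (or_introl erefl); [left|right]. Qed.

Definition pair_colour (a b : T) : 'I_3 :=
  if a == b then inord 0 else if pair_pick a b == a then inord 1 else inord 2.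

Lemma pair_colour_triple a b : a != b ->
  [set pair_colour a a; pair_colour a b; pair_colour b a]%SET = [set: 'I_3]%SET.
Proof.
move=> neq_ab; have neq_ba : b != a by rewrite eq_sym.
rewrite /pair_colour eqxx (negbTE neq_ab) (negbTE neq_ba) (pair_pickC b a).
apply/setP => i; rewrite !inE.
have [-> | ->] := pair_pickP a b; rewrite eqxx ?(negbTE neq_ab) ?(negbTE neq_ba);
  by case: i => -[|[|[|//]]] lt_i3; rewrite -!val_eqE /= !inordK.
Qed.
End PairColouring.

Section OmegaCovers.
Variable X : topologicalType.
Implicit Types U B V : set (set X).

Definition omega_splittable U : Prop :=
  exists B1 B2, [/\ omega_cover B1, omega_cover B2, B1 `&` B2 = set0 & B1 `|` B2 = U].

Lemma omega_cover_sub V U : omega_cover U -> V `<=` U ->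
  (forall F, finite_set F -> exists2 A, V A & F `<=` A) -> omega_cover V.
Proof. by move=> [oU nUT _] VU cofV; split=> [A /VU/oU | /VU |]. Qed.

Lemma omega_cover_two_members U (F : set X) : omega_cover U -> finite_set F ->
  exists c d, [/\ U c, U d, F `<=` c, F `<=` d & c <> d].
Proof.
move=> [_ nUT cofU] finF; have [c Uc Fc] := cofU F finF.
have [x ncx] : exists x, ~ c x.
  apply: contrapT => /forallNP allc; apply: nUT.
  by rewrite (_ : setT = c) //; apply/seteqP; split=> // y _; exact: contrapT (allc y).
have finFx : finite_set (F `|` [set x]) by rewrite finite_setU; split=> //; exact: finite_set1.
have [d Ud Fxd] := cofU _ finFx.
exists c, d; split=> //.
- by move=> y Fy; apply: Fxd; left.
- by move=> eq_cd; apply: ncx; rewrite eq_cd; apply: Fxd; right.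
Qed.

Lemma omega_subcover_cofinal U B : omega_cover U -> ~ omega_splittable U ->
  B `<=` U -> omega_cover B ->
  exists2 F : set X, finite_set F & forall A, U A -> F `<=` A -> B A.
Proof.
move=> oU nsplitU BU oB; apply: contrapT => nF; apply: nsplitU.
exists B, (U `\` B); split=> //; last 2 first.
- by rewrite setDIK.
- by rewrite setDUK.
apply: omega_cover_sub oU (@subDsetl _ _ _) _ => F finF.
apply: contrapT => nA; apply: nF; exists F => // A UA FA.
by apply: contrapT => nBA; apply: nA; exists A.
Qed.

Lemma polarized3_split : polarized_omega X 3 -> split_omega X.
Proof.
move=> polar U oU; apply: contrapT => nsplitU.
have [B1 [B2 [B1U B2U oB1 oB2 [S [cardS colS]]]]] :=
  polar U U oU oU (@pair_colour _).
have [F1 finF1 B1F1] := omega_subcover_cofinal oU nsplitU B1U oB1.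
have [F2 finF2 B2F2] := omega_subcover_cofinal oU nsplitU B2U oB2.
have finF12 : finite_set (F1 `|` F2) by rewrite finite_setU.
have [c [d [Uc Ud Fc Fd /eqP neq_cd]]] := omega_cover_two_members oU finF12.
have inB1 e : U e -> F1 `|` F2 `<=` e -> B1 e.
  by move=> Ue Fe; apply: B1F1 => // y F1y; apply: Fe; left.
have inB2 e : U e -> F1 `|` F2 `<=` e -> B2 e.
  by move=> Ue Fe; apply: B2F2 => // y F2y; apply: Fe; right.
have : ([set: 'I_3] \subset S)%SET.
  rewrite -(pair_colour_triple neq_cd); apply/fintype.subsetP => i.
  by rewrite !inE => /orP[/orP[]|] /eqP ->; apply: colS; auto.
by move/subset_leq_card; rewrite cardsT card_ord leqNgt cardS.
Qed.

End OmegaCovers.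

Theorem theorem9p4 (X : topologicalType) :
  hausdorff_space X ->
  (forall n : nat, (0 < n)%N -> lindelof (power X n)) ->
  (forall k : nat, (0 < k)%N -> polarized_omega X k) ->
  split_omega X.
Proof. by move=> _ _ polar; exact/polarized3_split/polar. Qed.
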